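(* For every $\Delta > 0$ there exists a constant $c > 0$ such that the following holds for all sufficiently large $M$. Let $|\Psi_1\rangle$ be any normalized state of $M$ qubits that is a linear combination of tensor products $|s_1\rangle\otimes\cdots\otimes|s_M\rangle$ with each $|s_i\rangle\in\{|+\rangle,|-\rangle\}$, where every term appearing with nonzero coefficient has at most $r = cM$ factors equal to $|-\rangle$. Then measuring $|\Psi_1\rangle$ in the computational basis $\{|0\rangle,|1\rangle\}^{\otimes M}$ yields, with high probability, an outcome string $y\in\{0,1\}^M$ whose Hamming weight lies between $M(1/2-\Delta)$ and $M(1/2+\Delta)$. Here ''with high probability'' means that the probability of obtaining a string of weight outside this range is bounded by a quantity independent of the particular state $|\Psi_1\rangle$ that tends to $0$ as $M\to\infty$.
   Context: The single-qubit states are $|\pm\rangle = (|0\rangle \pm |1\rangle)/\sqrt{2}$, so that $|0\rangle = (|+\rangle+|-\rangle)/\sqrt{2}$ and $|1\rangle = (|+\rangle-|-\rangle)/\sqrt{2}$. The Hamming weight of $y\in\{0,1\}^M$ is the number of coordinates equal to $1$. Measuring in the computational basis gives outcome $y$ with probability $|\langle y|\Psi_1\rangle|^2$. *)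

From HB Require Import structures.
From mathcomp Require Import all_boot all_order all_algebra all_reals complex.
Set Implicit Arguments. Unset Strict Implicit. Unset Printing Implicit Defensive.
Import Order.TTheory GRing.Theory Num.Theory.
Local Open Scope ring_scope.

(* Complex numbers are R[i] for R : realType.  An M-qubit state is given by
   its amplitudes in the computational basis: psi y = <y|Psi>, where
   y : {ffun 'I_M -> bool} (true = |1>). *)

Definition bits (M : nat) := {ffun 'I_M -> bool}.

Definition sqnorm (R : realType) (z : R[i]) : R :=
  let: Complex a b := z in a ^+ 2 + b ^+ 2.

(* single-qubit states |+> and |->, as amplitude vectors: index false = |0>, true = |1> *)
Definition ket_plus (R : realType) (y : bool) : R[i] :=
  (Complex (Num.sqrt 2)^-1 0).
Definition ket_minus (R : realType) (y : bool) : R[i] :=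
  if y then - (Complex (Num.sqrt 2)^-1 0) else Complex (Num.sqrt 2)^-1 0.

(* the product state |s_1> (x) ... (x) |s_M>, s i = true meaning |s_i> = |->,
   written in the computational basis *)
Definition xket (R : realType) (M : nat) (s : bits M) (y : bits M) : R[i] :=
  \prod_(i < M) (if s i then ket_minus R (y i) else ket_plus R (y i)).

Definition hweight (M : nat) (y : bits M) : nat := #|[set i | y i]|.

Definition normalized (R : realType) (M : nat) (psi : bits M -> R[i]) : Prop :=
  \sum_(y : bits M) sqnorm (psi y) = 1.

Definition in_minus_span (R : realType) (M : nat) (r : R) (psi : bits M -> R[i]) : Prop :=
  exists a : bits M -> R[i],
    (forall s, a s != 0 -> (hweight s)%:R <= r) /\
    (forall y, psi y = \sum_(s : bits M) a s * xket R s y).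

Definition prob_outside (R : realType) (M : nat) (D : R) (psi : bits M -> R[i]) : R :=
  \sum_(y : bits M |
        ~~ ((M%:R * (2^-1 - D) <= (hweight y)%:R) && ((hweight y)%:R <= M%:R * (2^-1 + D))))
     sqnorm (psi y).

(* Write Psi = sum_s a_s |s> over sign patterns s of weight at most M/K.  The
   product states |s> form the (orthonormal) Hadamard basis, so sum_s |a_s|^2 = 1,
   and each of their amplitudes <y|s> is +-2^(-M/2); by Cauchy-Schwarz every
   outcome y then has probability at most #S 2^(-M), S the set of light patterns.
   Both #S and the number #U of unbalanced strings are exponentially small
   fractions of 2^M, by exponential moments: #S u^M <= 2 (1 + u^K)^M for u <= 1,
   and #U x^((m+1)M) <= 2 (1 + x^(2m))^M for x >= 1 and 1/(2m) <= D.  Hence the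
   probability is at most 4 q^M with
   q = (1 + u^K)/u * (1 + x^(2m))/(2 x^(m+1)); taking x slightly above 1 makes
   the second factor < 1, and then u close to 1 and K large make q < 1. *)

From HB Require Import structures.
From mathcomp Require Import all_boot all_order all_algebra all_reals complex.
From mathcomp Require Import ring lra.
From mathcomp Require Import topology normedtype sequences.
Set Implicit Arguments. Unset Strict Implicit. Unset Printing Implicit Defensive.
Import Order.TTheory GRing.Theory Num.Theory numFieldNormedType.Exports.
Local Open Scope ring_scope.
Local Open Scope complex_scope.

Lemma sqr_sum_le_card (R : realFieldType) (T : finType) (S : pred T) (x : T -> R) :
  (\sum_(t in S) x t) ^+ 2 <= #|S|%:R * \sum_(t in S) x t ^+ 2.
Proof.
have amgm s t : x s * x t <= (x s ^+ 2 + x t ^+ 2) / 2.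
  by rewrite ler_pdivlMr //; have := sqr_ge0 (x s - x t); nra.
rewrite expr2 mulr_suml; under eq_bigr do rewrite mulr_sumr.
apply: le_trans (ler_sum _ (fun s _ => ler_sum _ (fun t _ => amgm s t))) _.
under eq_bigr do rewrite -mulr_suml big_split /= sumr_const.
rewrite -mulr_suml big_split /= sumr_const.
by rewrite sumrMnl mulr_natl mulrDl -splitr.
Qed.

Lemma card_mul_le_sum (R : numDomainType) (T : finType) (P : pred T) (c : R) (f : T -> R) :
  (forall t, 0 <= f t) -> (forall t, P t -> c <= f t) -> #|P|%:R * c <= \sum_t f t.
Proof.
move=> f_ge0 Pf; rewrite -sum1_card natr_sum mulr_suml [leRHS](bigID P) /=.
apply: ler_wpDr; first exact: sumr_ge0.
by apply: ler_sum => t Pt; rewrite mul1r Pf.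
Qed.

Lemma prod_bits_hweight (R : comNzRingType) M (a b : R) (y : bits M) :
  \prod_(i < M) (if y i then a else b) = a ^+ hweight y * b ^+ (M - hweight y).
Proof.
rewrite (bigID y) /= (eq_bigr (fun=> a)) => [|i ->//].
rewrite [X in _ * X](eq_bigr (fun=> b)) => [|i /negPf ->//].
rewrite !prodr_const /hweight cardsE; congr (_ * b ^+ _).
have cardyC := cardC (fun_of_fin y); rewrite card_ord in cardyC.
by rewrite -[X in (X - _)%N]cardyC addKn; apply: eq_card.
Qed.

Lemma sum_hweight_expr (R : comNzRingType) M (a b : R) :
  \sum_(y : bits M) a ^+ hweight y * b ^+ (M - hweight y) = (a + b) ^+ M.
Proof.
under eq_bigr do rewrite -prod_bits_hweight.
rewrite -(bigA_distr_bigA (fun _ (c : bool) => if c then a else b)).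
by rewrite big_bool prodr_const card_ord.
Qed.

Lemma card_mul_le_sum_hweight (R : realFieldType) M (P : pred (bits M)) (t : R) (k a : nat) :
  0 <= t ->
  (forall y, P y -> t ^+ k <= t ^+ (a * hweight y) + t ^+ (a * (M - hweight y))) ->
  #|P|%:R * t ^+ k <= 2 * (t ^+ a + 1) ^+ M.
Proof.
move=> t_ge0 Pt; rewrite mulr2n mulrDl mul1r.
rewrite -{1}sum_hweight_expr -{1}[t ^+ a + 1]addrC -sum_hweight_expr -big_split /=.
apply: card_mul_le_sum => y.
  by rewrite !expr1n mulr1 mul1r addr_ge0 // exprn_ge0 // exprn_ge0.
by rewrite !expr1n mulr1 mul1r -!exprM; apply: Pt.
Qed.

Lemma hweight_le M (y : bits M) : (hweight y <= M)%N.
Proof. by rewrite /hweight -[X in (_ <= X)%N]card_ord max_card. Qed.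

Definition unbalanced (R : realFieldType) M (D : R) (y : bits M) : bool :=
  ~~ ((M%:R * (2^-1 - D) <= (hweight y)%:R) && ((hweight y)%:R <= M%:R * (2^-1 + D))).

Lemma leq_of_gt_half_add (R : realFieldType) (M m v : nat) (D : R) :
  1 <= 2 * m%:R * D -> M%:R * (2^-1 + D) < v%:R -> (m.+1 * M <= 2 * m * v)%N.
Proof.
move=> mD Mv; rewrite -(ler_nat R) !natrM -natr1.
have : 2 * m%:R * (M%:R * (2^-1 + D)) <= 2 * m%:R * v%:R :> R.
  by apply: ler_wpM2l (ltW Mv); rewrite mulr_ge0.
have : M%:R <= M%:R * (2 * m%:R * D) :> R by rewrite ler_peMr.
nra.
Qed.

Lemma card_unbalanced_le (R : realFieldType) M (D x : R) (m : nat) :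
  1 <= x -> 1 <= 2 * m%:R * D ->
  #|[pred y : bits M | unbalanced D y]|%:R * x ^+ (m.+1 * M) <= 2 * (x ^+ (2 * m) + 1) ^+ M.
Proof.
move=> x_ge1 mD; apply: card_mul_le_sum_hweight => [|y]; first lra.
have pow_le v : M%:R * (2^-1 + D) < v%:R -> x ^+ (m.+1 * M) <= x ^+ (2 * m * v).
  by move=> /(leq_of_gt_half_add mD); apply: ler_weXn2l.
have pow_ge0 v : 0 <= x ^+ v by rewrite exprn_ge0 //; lra.
rewrite inE /unbalanced negb_and -!ltNge => /orP[low|high].
  by apply: ler_wpDl; rewrite ?pow_ge0 // pow_le // natrB ?hweight_le //; lra.
by apply: ler_wpDr; rewrite ?pow_ge0 // pow_le.
Qed.

Section HadamardBasis.
Variables (R : realType) (M : nat).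
Local Notation k := ((Num.sqrt 2)^-1 : R).

Lemma sqr_invsqrt2 : k ^+ 2 = 2^-1.
Proof. by rewrite exprVn sqr_sqrtr. Qed.

Definition hadamard (s y : bits M) : R :=
  \prod_(i < M) (if s i && y i then - k else k).

Lemma xket_hadamard s y : xket R s y = (hadamard s y)%:C.
Proof.
rewrite /xket /hadamard rmorph_prod; apply: eq_bigr => i _.
by rewrite /ket_minus /ket_plus; case: (s i); case: (y i); rewrite //= rmorphN.
Qed.

Lemma sqr_hadamard s y : hadamard s y ^+ 2 = 2^-1 ^+ M.
Proof.
rewrite -prodrXl (eq_bigr (fun=> 2^-1)) ?prodr_const ?card_ord // => i _.
by case: (_ && _); rewrite ?sqrrN sqr_invsqrt2.
Qed.

Lemma hadamard_orthonormal s s' :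
  \sum_y hadamard s y * hadamard s' y = (s == s')%:R.
Proof.
pose f i (b : bool) := (if s i && b then - k else k) * (if s' i && b then - k else k).
have sum_fE i : \sum_b f i b = (s i == s' i)%:R.
  have k2 : k * k = 2^-1 by rewrite -expr2 sqr_invsqrt2.
  rewrite big_bool /f; case: (s i); case: (s' i) => /=;
    rewrite ?mulrNN ?mulrN ?mulNr k2 ?addNr //; lra.
under eq_bigr do rewrite -big_split /=.
rewrite -(bigA_distr_bigA f) /=; under eq_bigr do rewrite sum_fE.
have [<-|neq] := eqVneq s s'; first by rewrite big1 // => i _; rewrite eqxx.
have /existsP[i ne_i] : [exists i, s i != s' i].
  apply: contraNT neq => /existsPn eq_ss'.
  by apply/eqP/ffunP => i; apply/eqP/negPn/eq_ss'.
by rewrite (bigD1 i) //= (negbTE ne_i) mul0r.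
Qed.

Lemma sum_sqr_hadamard_comb (al : bits M -> R) :
  \sum_y (\sum_s al s * hadamard s y) ^+ 2 = \sum_s al s ^+ 2.
Proof.
have sqrE y : (\sum_s al s * hadamard s y) ^+ 2
    = \sum_s \sum_s' al s * al s' * (hadamard s y * hadamard s' y).
  rewrite expr2 mulr_suml; apply: eq_bigr => s _.
  by rewrite mulr_sumr; apply: eq_bigr => s' _; ring.
under eq_bigr do rewrite sqrE.
rewrite exchange_big; apply: eq_bigr => s _.
rewrite exchange_big (bigD1 s) //= [X in _ + X]big1 => [|s' ne_s's].
  by rewrite -mulr_sumr hadamard_orthonormal eqxx mulr1 addr0 expr2.
by rewrite -mulr_sumr hadamard_orthonormal eq_sym (negbTE ne_s's) mulr0.
Qed.

Lemma sqr_hadamard_comb_le (S : pred (bits M)) (al : bits M -> R) y :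
  (forall s, ~~ S s -> al s = 0) ->
  (\sum_s al s * hadamard s y) ^+ 2 <= #|S|%:R * 2^-1 ^+ M * \sum_s al s ^+ 2.
Proof.
move=> al0.
have supp_sum (F : bits M -> R) :
    (forall s, al s = 0 -> F s = 0) -> \sum_s F s = \sum_(s in S) F s.
  by move=> F0; rewrite (bigID S) /= [X in _ + X]big1 ?addr0 // => s /al0 /F0.
rewrite supp_sum => [|s ->]; last by rewrite mul0r.
apply: le_trans (sqr_sum_le_card _ _) _.
rewrite -mulrA; apply: ler_wpM2l => //.
rewrite mulr_sumr (supp_sum (fun s => 2^-1 ^+ M * al s ^+ 2)) => [|s ->]; last first.
  by rewrite expr0n mulr0.
by under eq_bigr do rewrite exprMn sqr_hadamard mulrC.
Qed.

Lemma sqnormE (z : R[i]) : sqnorm z = complex.Re z ^+ 2 + complex.Im z ^+ 2.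
Proof. by case: z. Qed.

Lemma sqnorm_comb_xket (a : bits M -> R[i]) y :
  sqnorm (\sum_s a s * xket R s y)
  = (\sum_s complex.Re (a s) * hadamard s y) ^+ 2
    + (\sum_s complex.Im (a s) * hadamard s y) ^+ 2.
Proof.
have ReD : {morph @complex.Re R : z w / z + w} by move=> [? ?] [? ?].
have ImD : {morph @complex.Im R : z w / z + w} by move=> [? ?] [? ?].
rewrite sqnormE (big_morph _ ReD (erefl : complex.Re 0 = 0)).
rewrite (big_morph _ ImD (erefl : complex.Im 0 = 0)).
by congr (_ ^+ 2 + _ ^+ 2); apply: eq_bigr => s _;
  rewrite xket_hadamard; case: (a s) => ? ? /=; ring.
Qed.

Lemma sum_sqnorm_comb_xket (a : bits M -> R[i]) :
  \sum_y sqnorm (\sum_s a s * xket R s y) = \sum_s sqnorm (a s).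
Proof.
under eq_bigr do rewrite sqnorm_comb_xket.
rewrite big_split /= !sum_sqr_hadamard_comb -big_split /=.
by apply: eq_bigr => s _; rewrite sqnormE.
Qed.

Lemma sqnorm_comb_xket_le (S : pred (bits M)) (a : bits M -> R[i]) y :
  (forall s, ~~ S s -> a s = 0) ->
  sqnorm (\sum_s a s * xket R s y) <= #|S|%:R * 2^-1 ^+ M * \sum_s sqnorm (a s).
Proof.
move=> a0; rewrite sqnorm_comb_xket.
under [in leRHS]eq_bigr do rewrite sqnormE.
rewrite big_split mulrDr /=.
by apply: lerD; apply: sqr_hadamard_comb_le => s /a0 ->.
Qed.

End HadamardBasis.

Lemma prob_outside_le_card (R : realType) M (K : nat) (D : R) (psi : bits M -> R[i]) :
  (0 < K)%N -> normalized psi -> in_minus_span (K%:R^-1 * M%:R) psi ->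
  prob_outside D psi <=
    #|[pred s : bits M | (K * hweight s <= M)%N]|%:R * 2^-1 ^+ M
    * #|[pred y : bits M | unbalanced D y]|%:R.
Proof.
move=> K_gt0 psi_normed [a [a_light psiE]].
have a0 s : ~~ (K * hweight s <= M)%N -> a s = 0.
  by apply: contraNeq => /a_light; rewrite ler_pdivlMl ?ltr0n // -natrM ler_nat.
have a_normed : \sum_s sqnorm (a s) = 1.
  by rewrite -sum_sqnorm_comb_xket -psi_normed; apply: eq_bigr => y _; rewrite psiE.
have amp y : sqnorm (psi y) <= #|[pred s : bits M | (K * hweight s <= M)%N]|%:R * 2^-1 ^+ M.
  by rewrite psiE; apply: le_trans (sqnorm_comb_xket_le _ a0) _; rewrite a_normed mulr1.
rewrite /prob_outside; apply: le_trans (ler_sum _ (fun y _ => amp y)) _.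
by rewrite sumr_const mulr_natr.
Qed.

Lemma prob_outside_le_expr (R : realType) M (K m : nat) (D x u : R) (psi : bits M -> R[i]) :
  (0 < K)%N -> 0 < u <= 1 -> 1 <= x -> 1 <= 2 * m%:R * D ->
  normalized psi -> in_minus_span (K%:R^-1 * M%:R) psi ->
  prob_outside D psi <=
    4 * ((u ^+ K + 1) / u * ((x ^+ (2 * m) + 1) / (2 * x ^+ m.+1))) ^+ M.
Proof.
move=> K_gt0 /andP[u_gt0 u_le1] x_ge1 mD psi_normed psi_light.
apply: le_trans (prob_outside_le_card D K_gt0 psi_normed psi_light) _.
have x_gt0 : 0 < x by lra.
have card_light : #|[pred s : bits M | (K * hweight s <= M)%N]|%:R
    <= 2 * (u ^+ K + 1) ^+ M / u ^+ M.
  rewrite ler_pdivlMr ?exprn_gt0 //.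
  apply: card_mul_le_sum_hweight => [|s Ks]; first exact: ltW.
  by apply: ler_wpDr; [rewrite exprn_ge0 ?ltW | exact: ler_wiXn2l (ltW u_gt0) u_le1 _ _ Ks].
have card_unbalanced : #|[pred y : bits M | unbalanced D y]|%:R
    <= 2 * (x ^+ (2 * m) + 1) ^+ M / x ^+ (m.+1 * M).
  by rewrite ler_pdivlMr ?exprn_gt0 //; apply: card_unbalanced_le.
have -> : 4 * ((u ^+ K + 1) / u * ((x ^+ (2 * m) + 1) / (2 * x ^+ m.+1))) ^+ M
    = 2 * (u ^+ K + 1) ^+ M / u ^+ M * 2^-1 ^+ M
      * (2 * (x ^+ (2 * m) + 1) ^+ M / x ^+ (m.+1 * M)).
  rewrite !exprMn !exprVn exprMn -exprM.
  by field; rewrite !expf_neq0 ?gt_eqF.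
apply: ler_pM => //; first by rewrite mulr_ge0 ?exprn_ge0 ?invr_ge0.
by rewrite ler_pM2r ?exprn_gt0 ?invr_gt0.
Qed.

Lemma one_add_expr_le (R : realFieldType) (h : R) (m : nat) :
  0 <= h -> 2 * m%:R * h <= 1 -> (1 + h) ^+ m <= 1 + 2 * m%:R * h.
Proof.
move=> h_ge0; elim: m => [|m IHm] mh; first by rewrite expr0 mulr0 mul0r addr0.
have mh' : 2 * m%:R * h <= 1.
  by apply: le_trans mh; rewrite ler_wpM2r // ler_wpM2l // ler_nat.
rewrite exprS; apply: le_trans (ler_wpM2l _ (IHm mh')) _; first lra.
rewrite -natr1; nra.
Qed.

Lemma balanced_ratio_lt1 (R : realFieldType) (h : R) (m : nat) :
  (0 < m)%N -> 0 < h -> 4 * m%:R ^+ 2 * h <= 1 ->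
  1 + (1 + h) ^+ (2 * m) < 2 * (1 + h) ^+ m.+1.
Proof.
move=> m_gt0 h_gt0 mh.
have m_ge1 : 1 <= m%:R :> R by rewrite ler1n.
have mh_le : 2 * m%:R * h <= 4 * m%:R ^+ 2 * h.
  by rewrite ler_wpM2r ?ltW //; nra.
have p_le := one_add_expr_le (ltW h_gt0) (le_trans mh_le mh).
have p_ge1 : 1 <= (1 + h) ^+ m by rewrite exprn_ege1 // lerDl ltW.
rewrite mulnC exprM [(1 + h) ^+ m.+1]exprSr.
set p := (1 + h) ^+ m in p_le p_ge1 *.
have sqr_le : (p - 1) * (p - 1) <= (2 * m%:R * h) * (2 * m%:R * h).
  by apply: ler_pM; lra.
have sqrE : (2 * m%:R * h) * (2 * m%:R * h) = 4 * m%:R ^+ 2 * h * h by ring.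
have sqr_le_h : (p - 1) * (p - 1) <= h.
  by rewrite sqrE in sqr_le; apply: le_trans sqr_le (ler_piMl (ltW h_gt0) mh).
have := ler_peMl (ltW h_gt0) p_ge1.
nra.
Qed.

Lemma geometric_eventually_le (R : realType) (a q eta : R) : `|q| < 1 -> 0 < eta ->
  exists N, forall n, (N <= n)%N -> `|a * q ^+ n| <= eta.
Proof.
move=> q_lt1 eta_gt0.
have [N _ HN] := proj1 (cvgr0Pnorm_le _) (cvg_geometric a q_lt1) _ eta_gt0.
by exists N => n /HN.
Qed.

Lemma exists_light_factor (R : realType) (rho : R) : 0 < rho < 1 ->
  exists u K, [/\ 0 < u <= 1, (0 < K)%N & 0 <= (u ^+ K + 1) / u * rho < 1].
Proof.
move=> /andP[rho_gt0 rho_lt1]; pose u := (1 + rho) / 2.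
have u_gt0 : 0 < u by rewrite /u; lra.
have u_lt1 : `|u| < 1 by rewrite gtr0_norm /u //; lra.
have rho_lt_u : 0 < u - rho by rewrite /u; lra.
have [N uN] := geometric_eventually_le 1 u_lt1 rho_lt_u.
have uN_le : u ^+ N.+1 <= u - rho.
  by have := uN N.+1 (leqnSn N); rewrite mul1r ger0_norm // exprn_ge0 // ltW.
exists u, N.+1; split => //; first by rewrite u_gt0 /= /u; lra.
rewrite !mulr_ge0 ?invr_ge0 ?addr_ge0 ?exprn_ge0 ?ltW //=.
rewrite mulrAC ltr_pdivrMr // mul1r.
have : 0 < (1 - rho) * (u - rho) by rewrite mulr_gt0 // subr_gt0.
nra.
Qed.

Lemma exists_balanced_ratio (R : realType) (D : R) : 0 < D ->
  exists (m : nat) (x : R),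
    [/\ 1 <= x, 1 <= 2 * m%:R * D & 0 < (x ^+ (2 * m) + 1) / (2 * x ^+ m.+1) < 1].
Proof.
move=> D_gt0; pose m := (Num.Def.archi_bound D^-1).+1.
pose h : R := (4 * m%:R ^+ 2)^-1.
have h_gt0 : 0 < h by rewrite invr_gt0 mulr_gt0 // exprn_gt0 // ltr0n.
exists m, (1 + h); split; first by lra.
  have Dm : D^-1 < m%:R.
    by apply: lt_le_trans (archi_boundP _) _; rewrite ?ler_nat // invr_ge0 ltW.
  have : D^-1 * D = 1 by rewrite mulVf ?gt_eqF.
  nra.
have den_gt0 : 0 < 2 * (1 + h) ^+ m.+1 by rewrite mulr_gt0 // exprn_gt0 //; lra.
rewrite divr_gt0 ?ltr_wpDl ?exprn_ge0 ?ltr_pdivrMr //=; last lra.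
rewrite mul1r addrC; apply: balanced_ratio_lt1 => //.
by rewrite /h mulfV // mulf_neq0 ?expf_neq0 ?pnatr_eq0.
Qed.

Theorem lemma1 (R : realType) (D : R) (hD : 0 < D) :
  exists c : R, 0 < c /\
  exists eps : nat -> R,
    (forall eta : R, 0 < eta -> exists N : nat, forall M : nat, (N <= M)%N -> `|eps M| <= eta) /\
    exists M0 : nat, forall M : nat, (M0 <= M)%N ->
      forall psi : bits M -> R[i],
        normalized psi -> in_minus_span (c * M%:R) psi ->
        prob_outside D psi <= eps M.
Proof.
have [m [x [x_ge1 mD rho01]]] := exists_balanced_ratio hD.
have [u [K [u01 K_gt0 /andP[q_ge0 q_lt1]]]] := exists_light_factor rho01.
exists K%:R^-1; split; first by rewrite invr_gt0 ltr0n.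
exists (fun M => 4 * ((u ^+ K + 1) / u * ((x ^+ (2 * m) + 1) / (2 * x ^+ m.+1))) ^+ M).
split; first by move=> eta; apply: geometric_eventually_le; rewrite ger0_norm.
by exists 0%N => M _ psi; apply: prob_outside_le_expr.
Qed.
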